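(* Let $\ell,\tilde\ell\in\mathcal{D}^-[0,\infty)$ and $r,\tilde r\in\mathcal{D}^+[0,\infty)$ with $\tilde\ell\le\ell$, $r\le\tilde r$ and $\inf_{t\ge0}(r(t)-\ell(t))>0$. Given $\psi\in\mathcal{D}[0,\infty)$, let $(\eta_\ell,\eta_r)$ and $(\eta_{\tilde\ell},\eta_{\tilde r})$ be the constraining processes associated with the SP for $\psi$ on $[\ell(\cdot),r(\cdot)]$ and on $[\tilde\ell(\cdot),\tilde r(\cdot)]$, respectively. Then for every $t\ge0$, $\eta_r(t)\ge\eta_{\tilde r}(t)$ and $\eta_\ell(t)\ge\eta_{\tilde\ell}(t)$.
   Context: $\mathcal{D}[0,\infty)$ denotes the càdlàg functions $[0,\infty)\to(-\infty,\infty)$; $\mathcal{D}^-[0,\infty)$ (resp. $\mathcal{D}^+[0,\infty)$) denotes càdlàg functions with values in $[-\infty,\infty)$ (resp. $(-\infty,\infty]$). SP: $(\phi,\eta)\in\mathcal{D}[0,\infty)^2$ solves the SP on $[\ell(\cdot),r(\cdot)]$ for $\psi$ if (1) $\phi(t)=\psi(t)+\eta(t)\in[\ell(t),r(t)]$ for all $t\ge0$; (2) $\eta=\eta_\ell-\eta_r$ with $\eta_\ell,\eta_r$ non-decreasing and $\int_0^\infty \mathbb{I}_{\{\phi(s)>\ell(s)\}}\,d\eta_\ell(s)=0$, $\int_0^\infty \mathbb{I}_{\{\phi(s)<r(s)\}}\,d\eta_r(s)=0$. The pair $(\eta_\ell,\eta_r)$ is called the pair of constraining processes associated with the SP. When $\inf_t(r(t)-\ell(t))>0$,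 the SP has a unique solution for every $\psi\in\mathcal{D}[0,\infty)$. *)

From HB Require Import structures.
From mathcomp Require Import all_boot all_order all_algebra.
From mathcomp Require Import all_classical all_reals all_analysis.
Set Implicit Arguments. Unset Strict Implicit. Unset Printing Implicit Defensive.
Import Order.TTheory GRing.Theory Num.Theory.
Import numFieldNormedType.Exports.
Local Open Scope classical_set_scope.
Local Open Scope ring_scope.

Section Defs.
Context {R : realType}.

(** f : [0,oo) -> R is cadlag (only values at t >= 0 matter):
    right-continuous at every t >= 0, left limits (in R) at every t > 0. *)
Definition cadlag (f : R -> R) : Prop :=
  (forall t, 0 <= t -> f x @[x --> t^'+] --> f t) /\
  (forall t, 0 < t -> exists l : R, f x @[x --> t^'-] --> l).

Definition cadlag_ext (P : \bar R -> Prop) (f : R -> \bar R) : Prop :=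
  (forall t, 0 <= t -> P (f t)) /\
  (forall t, 0 <= t -> f x @[x --> t^'+] --> f t) /\
  (forall t, 0 < t -> exists l : \bar R, P l /\ f x @[x --> t^'-] --> l).

Definition Dminus (f : R -> \bar R) : Prop := cadlag_ext (fun x => x <> +oo%E) f.
Definition Dplus (f : R -> \bar R) : Prop := cadlag_ext (fun x => x <> -oo%E) f.

(** extension of a function on [0,oo) by 0 on (-oo,0), i.e. eta(0-) = 0 *)
Definition ext0 (eta : R -> R) : R -> R := fun x => if x < 0 then 0 else eta x.

(** [int_{[0,oo)} 1_A d eta = 0] for a non-decreasing right-continuous eta
    (with the convention eta(0-) = 0): the Lebesgue-Stieltjes measure of
    the extended function vanishes on A. The existence of [F] also
    expresses that [ext0 eta] is non-decreasing and right-continuous. *)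
Definition LS_null (eta : R -> R) (A : set R) : Prop :=
  exists F : cumulative R R,
    (forall x, F x = ext0 eta x) /\ lebesgue_stieltjes_measure F A = 0%E.

Definition SP_solution (l r : R -> \bar R) (psi phi eta etal etar : R -> R)
  : Prop :=
  cadlag phi /\ cadlag eta /\
  (forall t, 0 <= t -> phi t = psi t + eta t) /\
  (forall t, 0 <= t -> (l t <= (phi t)%:E)%E /\ ((phi t)%:E <= r t)%E) /\
  (forall t, 0 <= t -> eta t = etal t - etar t) /\
  (0 <= etal 0 /\ {in `[0, +oo[ &, {homo etal : x y / x <= y}}) /\
  (0 <= etar 0 /\ {in `[0, +oo[ &, {homo etar : x y / x <= y}}) /\
  LS_null etal [set s | 0 <= s /\ (l s < (phi s)%:E)%E] /\
  LS_null etar [set s | 0 <= s /\ ((phi s)%:E < r s)%E].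

End Defs.

From HB Require Import structures.
From mathcomp Require Import all_boot all_order all_algebra.
From mathcomp Require Import all_classical all_reals all_analysis.
From mathcomp Require Import lra.
Import Order.TTheory GRing.Theory Num.Theory.
Import numFieldNormedType.Exports.

(* With [dr := eta_r - eta~_r] and [dl := eta_l - eta~_l] we have
   [phi - phi~ = dl - dr].  Since [eta~_r] grows only while
   [phi~ = r~ >= r >= phi], i.e. while [dl <= dr], the difference [dr]
   cannot turn negative as long as [dl] stays nonnegative, and
   symmetrically.  At the first time [tau] at which [dr] or [dl] turns
   negative, [phi~] is away from one of its barriers (these are
   separated, as [l~ <= l < r <= r~]), hence, by right-continuity, on
   some [[tau, tau + d)], where the corresponding process of [phi~] is
   therefore flat.  This keeps both [dr] and [dl] nonnegative beyond
   [tau], a contradiction. *)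

Local Open Scope classical_set_scope.
Local Open Scope ring_scope.

Section LebesgueStieltjesNull.
Context {R : realType} (F : cumulative R R).
Local Notation mu := (lebesgue_stieltjes_measure F).

Lemma lebesgue_stieltjes_measure_itv_oc (a b : R) :
  a <= b -> mu `]a, b] = (F b - F a)%:E.
Proof.
move=> ab; rewrite /lebesgue_stieltjes_measure /measure_extension.
by rewrite measurable_mu_extE/= ?wlength_itv_bnd//; exact: is_ocitv.
Qed.

Lemma le_lebesgue_stieltjes_measure (A B : set R) :
  A `<=` B -> (mu A <= mu B)%E.
Proof. by move=> AB; exact: le_mu_ext. Qed.

Lemma lebesgue_stieltjes_measure_sub0 (A B : set R) :
  mu B = 0%E -> A `<=` B -> mu A = 0%E.
Proof.
move=> B0 AB; apply/eqP; rewrite eq_le measure_ge0 andbT -B0.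
exact: le_lebesgue_stieltjes_measure.
Qed.

(* [mu `[u, s] = F s - F (u-)], so a null [`[u, s]] forces [F (u-) = F s]. *)
Lemma lebesgue_stieltjes_measure_itv_cc0_left (u s : R) : u <= s ->
  mu `[u, s] = 0%E -> forall e, 0 < e -> exists2 a, a < u & F s - F a <= e.
Proof.
move=> us mu0 e e0.
have inv_gt0 (n : nat) : 0 < n.+1%:R^-1 :> R by rewrite invr_gt0 ltr0n.
pose G (n : nat) := `](u - n.+1%:R^-1), s]%classic.
have capG : \bigcap_n G n = `[u, s]%classic.
  apply/seteqP; split => x /=; last first.
    rewrite in_itv /= => /andP[ux xs] n _; rewrite /G /= in_itv /= xs andbT.
    by rewrite ltrBlDr (le_lt_trans ux)// ltrDl.
  move=> Gx; move: (Gx 0%N I); rewrite /G /= !in_itv /= => /andP[_ ->].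
  rewrite andbT leNgt; apply/negP => /ltr_add_invr[k uk].
  move: (Gx k I); rewrite /G /= in_itv /= ltrBlDr => /andP[+ _].
  by move=> /lt_trans/(_ uk); rewrite ltxx.
have : (fun n => mu (G n)) @ \oo --> mu (\bigcap_n G n).
  apply: nonincreasing_cvg_mu => [|n||].
  - change (mu (G 0%N) < +oo)%E.
    by rewrite lebesgue_stieltjes_measure_itv_oc ?ltry//; have := inv_gt0 0%N; lra.
  - exact: measurable_itv.
  - by rewrite capG; exact: measurable_itv.
  - move=> n m nm; apply/subsetPset => x; rewrite /G /= !in_itv /=.
    move=> /andP[+ ->]; rewrite andbT; apply: le_lt_trans.
    by rewrite lerD2l lerN2 lef_pV2 ?posrE ?ltr0n// ler_nat.
have e0E : (0%:E < e%:E)%E by rewrite lte_fin.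
rewrite capG mu0 => /(_ _ (open_ereal_lt' e0E))[N _ /(_ N (leqnn N))].
rewrite /= lebesgue_stieltjes_measure_itv_oc; last first.
  by rewrite lerBlDr (le_trans us)// lerDl ltW.
by rewrite lte_fin => FN; exists (u - N.+1%:R^-1); [rewrite ltrBlDr ltrDl | lra].
Qed.

Lemma lebesgue_stieltjes_measure0_sup_approx (P B : set R) (s : R) :
  P !=set0 -> ubound P s -> mu B = 0%E ->
  (forall x, sup P <= x -> x <= s -> ~ P x -> B x) ->
  forall e, 0 < e -> exists2 w, P w & F s - F w <= e.
Proof.
move=> P0 Ps B0 PB e e0.
have supPs : sup P <= s by exact: ge_sup.
have notP x : sup P < x -> ~ P x.
  by move=> + /(sup_upper_bound (conj P0 (ex_intro _ s Ps))); rewrite leNgt => ->.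
have [Psup|nPsup] := pselect (P (sup P)).
  exists (sup P) => //.
  have : mu `](sup P), s] = 0%E.
    apply: lebesgue_stieltjes_measure_sub0 B0 _ => x /=.
    by rewrite in_itv /= => /andP[supx xs]; apply: PB (ltW supx) xs (notP _ supx).
  by rewrite lebesgue_stieltjes_measure_itv_oc// => -[->]; lra.
have : mu `[(sup P), s] = 0%E.
  apply: lebesgue_stieltjes_measure_sub0 B0 _ => x /=.
  rewrite in_itv /= => /andP[supx xs]; apply: (PB _ supx xs).
  by move: supx; rewrite le_eqVlt => /predU1P[<- //|/notP].
move=> /lebesgue_stieltjes_measure_itv_cc0_left-/(_ supPs e e0)[a asup Fa].
have [w Pw aw] := sup_gt P0 asup.
by exists w => //; have := cumulative_is_nondecreasing F _ _ (ltW aw); lra.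
Qed.

End LebesgueStieltjesNull.

Lemma right_lt_near {R : realType} {f : R -> R} {g : R -> \bar R} {t : R} :
  f x @[x --> t^'+] --> f t -> g x @[x --> t^'+] --> g t ->
  ((f t)%:E < g t)%E ->
  exists2 d, 0 < d & forall w, t <= w -> w < t + d -> ((f w)%:E < g w)%E.
Proof.
move=> f_rc g_rc fg.
have [m fm mg] : exists2 m : R, f t < m & (m%:E < g t)%E.
  move: fg; case: (g t) => [gt | |] //= fg.
  - by exists ((f t + gt) / 2); rewrite ?lte_fin in fg *; lra.
  - by exists (f t + 1); [lra | rewrite ltry].
have f_lt : \forall x \near t^'+, f x < m by exact: cvgr_lt f_rc m fm.
have g_gt : \forall x \near t^'+, (m%:E < g x)%E := g_rc _ (open_ereal_gt' mg).
have : \forall x \near t, t < x -> f x < m /\ (m%:E < g x)%E.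
  exact: filterI f_lt g_gt.
move=> /nbhs_ballP[d d0 near_t].
exists d => // w; rewrite le_eqVlt => /predU1P[<- //|tw] wtd.
have [fwm mgw] : f w < m /\ (m%:E < g w)%E.
  apply: (near_t w _ tw).
  by rewrite /ball /= distrC ger0_norm ?subr_ge0 ?(ltW tw)// ltrBlDl.
by rewrite (lt_trans _ mgw)// lte_fin.
Qed.

Lemma right_gt_near {R : realType} {f : R -> R} {g : R -> \bar R} {t : R} :
  f x @[x --> t^'+] --> f t -> g x @[x --> t^'+] --> g t ->
  (g t < (f t)%:E)%E ->
  exists2 d, 0 < d & forall w, t <= w -> w < t + d -> (g w < (f w)%:E)%E.
Proof.
move=> f_rc g_rc; rewrite -lteN2 -EFinN => gf.
have [d d0 near_t] := right_lt_near (cvgN f_rc) (cvgeN g_rc) gf.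
by exists d => // w tw wtd; rewrite -lteN2 -EFinN; exact: near_t.
Qed.

Lemma lt_of_gap {R : realType} {a b : \bar R} {c : R} :
  0 < c -> (c%:E <= b - a)%E -> (a < b)%E.
Proof.
move=> c0; case: a => [a| |]; case: b => [b| |] //=; rewrite ?ltry ?ltNyr//.
by rewrite lte_fin lee_fin; lra.
Qed.

(* [et] carries no mass beyond the supremum of the times before [s] at
   which [et <= eta], so [et s] is approached by values of [et] at such
   times, all bounded by [eta s]. *)
Lemma LS_null_deficit_le {R : realType} {eta et : R -> R} {B : set R} {s : R} :
  0 <= eta 0 -> {in `[0, +oo[ &, {homo eta : x y / x <= y}} ->
  LS_null et B -> 0 <= s ->
  (forall w, 0 <= w -> w <= s -> eta w < et w -> B w) -> et s <= eta s.
Proof.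
move=> eta0 eta_mono [F [FE FB]] s0 deficitB.
have eta_le x y : 0 <= x -> x <= y -> eta x <= eta y.
  by move=> x0 xy; apply: eta_mono; rewrite ?in_itv /= ?andbT// (le_trans x0).
pose P := [set w | w <= s /\ (w < 0 \/ et w <= eta w)].
have P0 : P (-1) by split; [lra | left; lra].
have notPB x : sup P <= x -> x <= s -> ~ P x -> B x.
  move=> _ xs nPx; have x0 : 0 <= x.
    by rewrite leNgt; apply/negP => x0; apply: nPx; split => //; left.
  apply: deficitB => //; rewrite ltNge; apply/negP => ?.
  by apply: nPx; split => //; right.
rewrite leNgt; apply/negP => eta_lt.
have [|w [ws Pw] Fw] := lebesgue_stieltjes_measure0_sup_approx F P B s
  (ex_intro _ (-1) P0) (fun w => @proj1 _ _) FB notPB ((et s - eta s) / 2).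
  by lra.
have Fs : F s = et s by rewrite FE /ext0 ltNge s0.
have := eta_le 0 s (lexx 0) s0.
have [w0|w0] := ltP w 0.
- have : F w = 0 by rewrite FE /ext0 w0.
  lra.
- have : F w = et w by rewrite FE /ext0 ltNge w0.
  by have := eta_le w s w0 ws; case: Pw; lra.
Qed.

Section ConstrainingProcessesComparison.
Context {R : realType}.
Context {l lt r rt : R -> \bar R} {phi phit etal etar etalt etart : R -> R}.
Context {c : R}.
Hypotheses (lt_le_l : forall t, 0 <= t -> (lt t <= l t)%E)
  (r_le_rt : forall t, 0 <= t -> (r t <= rt t)%E)
  (c_gt0 : 0 < c) (gap : forall t, 0 <= t -> (c%:E <= r t - l t)%E).
Hypothesis phi_in :
  forall t, 0 <= t -> (l t <= (phi t)%:E)%E /\ ((phi t)%:E <= r t)%E.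
Hypotheses (etal0 : 0 <= etal 0)
  (etal_mono : {in `[0, +oo[ &, {homo etal : x y / x <= y}})
  (etar0 : 0 <= etar 0)
  (etar_mono : {in `[0, +oo[ &, {homo etar : x y / x <= y}}).
Hypotheses (etalt_null : LS_null etalt [set s | 0 <= s /\ (lt s < (phit s)%:E)%E])
  (etart_null : LS_null etart [set s | 0 <= s /\ ((phit s)%:E < rt s)%E]).
Hypotheses (phit_rc : forall t, 0 <= t -> phit x @[x --> t^'+] --> phit t)
  (lt_rc : forall t, 0 <= t -> lt x @[x --> t^'+] --> lt t)
  (rt_rc : forall t, 0 <= t -> rt x @[x --> t^'+] --> rt t).

Let dl t := etal t - etalt t.
Let dr t := etar t - etart t.

Hypothesis phi_sub : forall t, 0 <= t -> phi t - phit t = dl t - dr t.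

Lemma phit_interior t : 0 <= t ->
  ((phit t)%:E < rt t)%E \/ (lt t < (phit t)%:E)%E.
Proof.
move=> t0; have [|rt_le] := ltP (phit t)%:E (rt t); first by left.
right; rewrite ltNge; apply/negP => phit_le.
have := lt_of_gap c_gt0 (gap _ t0); apply/negP; rewrite -leNgt.
by rewrite (le_trans (r_le_rt _ t0)) // (le_trans rt_le) // (le_trans phit_le) ?lt_le_l.
Qed.

Lemma phit_lt_rt t : 0 <= t -> dr t < 0 -> 0 <= dl t -> ((phit t)%:E < rt t)%E.
Proof.
move=> t0 dr_lt dl_ge; apply: lt_le_trans (r_le_rt _ t0).
by apply: lt_le_trans (phi_in _ t0).2; rewrite lte_fin; have := phi_sub _ t0; lra.
Qed.

Lemma lt_lt_phit t : 0 <= t -> dl t < 0 -> 0 <= dr t -> (lt t < (phit t)%:E)%E.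
Proof.
move=> t0 dl_lt dr_ge; apply: le_lt_trans (lt_le_l _ t0) _.
by apply: le_lt_trans (phi_in _ t0).1 _; rewrite lte_fin; have := phi_sub _ t0; lra.
Qed.

Lemma dr_ge0_upto s : 0 <= s ->
  (forall w, 0 <= w -> w <= s -> dr w < 0 -> ((phit w)%:E < rt w)%E) -> 0 <= dr s.
Proof.
move=> s0 slack; rewrite subr_ge0.
apply: (LS_null_deficit_le etar0 etar_mono etart_null s0).
by move=> w w0 ws; rewrite -subr_lt0 => /(slack w w0 ws).
Qed.

Lemma dl_ge0_upto s : 0 <= s ->
  (forall w, 0 <= w -> w <= s -> dl w < 0 -> (lt w < (phit w)%:E)%E) -> 0 <= dl s.
Proof.
move=> s0 slack; rewrite subr_ge0.
apply: (LS_null_deficit_le etal0 etal_mono etalt_null s0).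
by move=> w w0 ws; rewrite -subr_lt0 => /(slack w w0 ws).
Qed.

Lemma dr_dl_ge0_upto_of_upper_slack v :
  (forall w, 0 <= w -> w <= v -> dr w < 0 -> ((phit w)%:E < rt w)%E) ->
  forall w, 0 <= w -> w <= v -> 0 <= dr w /\ 0 <= dl w.
Proof.
move=> slack w w0 wv.
have dr_ge0 u : 0 <= u -> u <= v -> 0 <= dr u.
  by move=> u0 uv; apply: dr_ge0_upto => // x x0 xu; apply: slack _ x0 (le_trans xu uv).
split; first exact: dr_ge0.
apply: dl_ge0_upto => // x x0 xw dl_lt.
exact: lt_lt_phit _ x0 dl_lt (dr_ge0 x x0 (le_trans xw wv)).
Qed.

Lemma dr_dl_ge0_upto_of_lower_slack v :
  (forall w, 0 <= w -> w <= v -> dl w < 0 -> (lt w < (phit w)%:E)%E) ->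
  forall w, 0 <= w -> w <= v -> 0 <= dr w /\ 0 <= dl w.
Proof.
move=> slack w w0 wv.
have dl_ge0 u : 0 <= u -> u <= v -> 0 <= dl u.
  by move=> u0 uv; apply: dl_ge0_upto => // x x0 xu; apply: slack _ x0 (le_trans xu uv).
split; last exact: dl_ge0.
apply: dr_ge0_upto => // x x0 xw dr_lt.
exact: phit_lt_rt _ x0 dr_lt (dl_ge0 x x0 (le_trans xw wv)).
Qed.

Lemma dr_dl_ge0 t : 0 <= t -> 0 <= dr t /\ 0 <= dl t.
Proof.
move=> t0; apply: contrapT => bad_t.
pose S := [set w | 0 <= w /\ ~ (0 <= dr w /\ 0 <= dl w)].
have S_lb : has_lbound S by exists 0 => w [].
have S_t : S !=set0 by exists t.
pose tau := inf S.
have tau0 : 0 <= tau by apply: lb_le_inf => // w [].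
have good_before w : 0 <= w -> w < tau -> 0 <= dr w /\ 0 <= dl w.
  move=> w0 wtau; apply: contrapT => bad_w.
  by move: wtau; rewrite ltNge (ge_inf S_lb (conj w0 bad_w)).
have bad_near d : 0 < d -> exists2 v, S v & v < tau + d.
  by move=> d0; apply: inf_lt => //; rewrite ltrDl.
have [upper|lower] := phit_interior _ tau0.
- have [d d0 slack] := right_lt_near (phit_rc _ tau0) (rt_rc _ tau0) upper.
  have [v [v0 bad_v] vtd] := bad_near d d0.
  apply: bad_v; apply: (dr_dl_ge0_upto_of_upper_slack v _ v v0 (lexx v)) => w w0 wv dr_lt.
  apply: slack; last exact: le_lt_trans wv vtd.
  by rewrite leNgt; apply/negP => /(good_before w w0)[]; lra.
- have [d d0 slack] := right_gt_near (phit_rc _ tau0) (lt_rc _ tau0) lower.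
  have [v [v0 bad_v] vtd] := bad_near d d0.
  apply: bad_v; apply: (dr_dl_ge0_upto_of_lower_slack v _ v v0 (lexx v)) => w w0 wv dl_lt.
  apply: slack; last exact: le_lt_trans wv vtd.
  by rewrite leNgt; apply/negP => /(good_before w w0)[]; lra.
Qed.

End ConstrainingProcessesComparison.

Theorem proposition3p3 (R : realType) (l lt r rt : R -> \bar R)
  (psi phi eta etal etar phit etat etalt etart : R -> R) :
  Dminus l -> Dminus lt -> Dplus r -> Dplus rt ->
  (forall t, 0 <= t -> (lt t <= l t)%E) ->
  (forall t, 0 <= t -> (r t <= rt t)%E) ->
  (exists c : R, 0 < c /\ forall t, 0 <= t -> (c%:E <= r t - l t)%E) ->
  cadlag psi ->
  SP_solution l r psi phi eta etal etar ->
  SP_solution lt rt psi phit etat etalt etart ->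
  forall t, 0 <= t -> etart t <= etar t /\ etalt t <= etal t.
Proof.
move=> _ [_ [lt_rc _]] _ [_ [rt_rc _]] lt_le_l r_le_rt [c [c_gt0 gap]] _ SP SPt.
case: SP => _ [_ [phiE [phi_in [etaE [[etal0 etal_mono] [[etar0 etar_mono] _]]]]]].
case: SPt => [[phit_rc _] [_ [phitE [_ [etatE [_ [_ [etalt_null etart_null]]]]]]]].
have phi_sub w : 0 <= w ->
    phi w - phit w = (etal w - etalt w) - (etar w - etart w).
  by move=> w0; rewrite phiE// phitE// etaE// etatE//; lra.
move=> t t0.
have := dr_dl_ge0 lt_le_l r_le_rt c_gt0 gap phi_in etal0 etal_mono etar0 etar_mono
  etalt_null etart_null phit_rc lt_rc rt_rc phi_sub t t0.
by rewrite /= !subr_ge0.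
Qed.
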